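(* Let $\mathbb{F}$ be a field of characteristic zero, let $J\ge 0$ be an integer, and let $r,\ell$ be integers with $r\ge 2$ and $1\le \ell\le r$. Then for every odd integer $k\ge 2J+1$, $$\mathrm{HP}^{k}_{\ell}=\sum_{j=1}^{\ell-1} q^{(k+1)j-1}\,\mathrm{HP}^{k+2}_{r-j+1}+\sum_{j=1}^{\ell} q^{(k+1)(j-1)}\,\mathrm{HP}^{k+2}_{r-j+1}.$$
   Context: For $k\ge1$ let $S_k=\mathbb{F}[x_k,x_{k+1},x_{k+2},\ldots]$, graded by weight: the monomial $x_{i_1}^{\alpha_1}\cdots x_{i_m}^{\alpha_m}$ has weight $\sum_t i_t\alpha_t$. Fix $r\ge2$. For $k\ge1$, let $L_k$ be the ideal of $S_k$ generated by the monomials $x_{2a-1}^2$ ($2a-1\ge k$), $x_{2b-1}x_{2b}^{r-1}$ ($2b-1\ge k$), $x_{2c}^{r-n_1}x_{2c+2}^{n_1}$ ($2c\ge k$, $0\le n_1\le r-1$), and $x_{2c}^{r-n_2-1}x_{2c+1}x_{2c+2}^{n_2}$ ($2c\ge k$, $0\le n_2\le r-2$), where $a,b,c$ range over integers. For $1\le \ell\le r$ define the ideal $L_k^{\ell}$ of $S_k$ as follows: if $k$ is even, $L_k^\ell$ is generated by $x_k^{\ell}$, the monomials $x_k^{\ell-t}x_{k+2}^{r-\ell+t}$ and $x_k^{\ell-t}x_{k+1}x_{k+2}^{r-\ell+t-1}$ for $t=1,\ldots,\ell-1$, and the generators of $L_{k+1}$; if $k$ is odd, $L_k^\ell$ is generated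 by $x_k^2$, $x_kx_{k+1}^{\ell-1}$, and the generators of $L_{k+1}^{\ell}$. These are homogeneous ideals. For a graded algebra $A=\bigoplus_{j\ge0}A_j$ with finite-dimensional components, its Hilbert–Poincaré series is $\sum_{j\ge0}\dim_{\mathbb{F}}(A_j)q^j$. Write $\mathrm{HP}^k_\ell$ for the Hilbert–Poincaré series of $S_k/L_k^\ell$ (a formal power series in $q$). *)

From Stdlib Require Import ClassicalEpsilon.
From HB Require Import structures.
From mathcomp Require Import all_boot all_order all_algebra.
Set Implicit Arguments. Unset Strict Implicit. Unset Printing Implicit Defensive.
Import GRing.Theory.

(* A monomial is given by its exponent function e : nat -> nat
   (e i = exponent of x_i). *)
Definition xpow (i e : nat) : nat -> nat := fun j => if j == i then e else 0.
Definition mmul (f g : nat -> nat) : nat -> nat := fun j => f j + g j.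

Definition genL (k r : nat) (g : nat -> nat) : Prop :=
  (exists i, odd i /\ k <= i /\ g = xpow i 2) \/
  (exists i, odd i /\ k <= i /\ g = mmul (xpow i 1) (xpow i.+1 (r - 1))) \/
  (exists i n1, ~~ odd i /\ k <= i /\ n1 <= r - 1 /\
                g = mmul (xpow i (r - n1)) (xpow i.+2 n1)) \/
  (exists i n2, ~~ odd i /\ k <= i /\ n2 <= r - 2 /\
                g = mmul (mmul (xpow i (r - n2 - 1)) (xpow i.+1 1)) (xpow i.+2 n2)).

Definition genLeven (k r l : nat) (g : nat -> nat) : Prop :=
  g = xpow k l \/
  (exists t, 1 <= t <= l - 1 /\
     (g = mmul (xpow k (l - t)) (xpow k.+2 (r - l + t)) \/
      g = mmul (mmul (xpow k (l - t)) (xpow k.+1 1)) (xpow k.+2 (r - l + t - 1)))) \/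
  genL k.+1 r g.

Definition genLl (k r l : nat) (g : nat -> nat) : Prop :=
  if odd k then
    g = xpow k 2 \/ g = mmul (xpow k 1) (xpow k.+1 (l - 1)) \/ genLeven k.+1 r l g
  else genLeven k r l g.

(* Exponent vectors on x_0, ..., x_n with exponents <= n; every monomial of
   weight n in S_k (k >= 1) is uniquely such a vector. *)
Definition Mon (n : nat) := {ffun 'I_n.+1 -> 'I_n.+1}.

Definition mweight n (e : Mon n) : nat := \sum_(i < n.+1) i * e i.

Definition inSk (k n : nat) (e : Mon n) : bool :=
  (mweight e == n) && [forall i : 'I_n.+1, (i < k) ==> (e i == 0 :> nat)].

Definition mext n (e : Mon n) : nat -> nat :=
  fun j => if j < n.+1 then nat_of_ord (e (inord j)) else 0.

Definition asb (P : Prop) : bool := if excluded_middle_informative P then true else false.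

Definition inIdeal (gen : (nat -> nat) -> Prop) n (e : Mon n) : bool :=
  asb (exists g m, gen g /\ mext e = mmul g m).

(* basis monomial e of the graded piece (S_k)_n = F^{monomials of weight n} *)
Definition mvec (F : fieldType) n (e : Mon n) : {ffun Mon n -> F^o} :=
  [ffun e' => ((e' == e)%:R)%R].

Definition Spiece (F : fieldType) (k n : nat) : {vspace {ffun Mon n -> F^o}} :=
  (\sum_(e : Mon n | inSk k e) <[mvec F e]>)%VS.

Definition Ipiece (F : fieldType) (gen : (nat -> nat) -> Prop) (k n : nat)
  : {vspace {ffun Mon n -> F^o}} :=
  (\sum_(e : Mon n | inSk k e && inIdeal gen e) <[mvec F e]>)%VS.

Definition HPcoef (F : fieldType) (gen : (nat -> nat) -> Prop) (k n : nat) : nat :=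
  (\dim (Spiece F k n) - \dim (Ipiece F gen k n))%N.

(* HP^k_l as a coefficient sequence: HP F k r l n = dim (S_k / L_k^l)_n *)
Definition HP (F : fieldType) (k r l : nat) : nat -> nat :=
  HPcoef F (genLl k r l) k.

(* multiplication of a formal power series (coefficient sequence) by q^s *)
Definition qshift (s : nat) (f : nat -> nat) : nat -> nat :=
  fun n => if s <= n then f (n - s) else 0.

(* For odd k, the generators x_k^2, x_k x_{k+1}^(l-1) and x_{k+1}^l of L_k^l force every
   monomial outside L_k^l to have exponents a <= 1 at x_k and b at x_{k+1} with a + b < l.
   Dividing out x_k^a x_{k+1}^b lowers the weight by k a + (k+1) b and is a bijection from
   the monomials of S_k outside L_k^l with these two exponents onto the monomials of S_{k+2}
   outside L_{k+2}^(r-b): once x_{k+1}^b is spent, the generators of L_k^l through x_{k+1}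
   are matched by the generators x_{k+3}^(r-b) and x_{k+2} x_{k+3}^(r-b-1) of L_{k+2}^(r-b).
   Both quotients have monomial bases, so their Hilbert series count monomials, and summing
   over a in {0, 1} and j = b + 1 gives the identity. *)

From Stdlib Require Import ClassicalEpsilon FunctionalExtensionality.
From mathcomp Require Import all_boot all_algebra zify.
Import GRing.Theory.

Set Implicit Arguments.
Unset Strict Implicit.
Unset Printing Implicit Defensive.

(** * Hilbert series as monomial counts *)

Lemma mvecE (F : fieldType) n (e e' : Mon n) : mvec F e e' = ((e' == e)%:R)%R.
Proof. exact: ffunE. Qed.

Lemma free_mvec (F : fieldType) n (s : seq (Mon n)) :
  uniq s -> free (map (@mvec F n) s).
Proof.
move=> s_uniq; apply/(@freeP _ _ _ (in_tuple (map (@mvec F n) s))) => c sum0 i.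
have scaleE (a : F) (v : {ffun Mon n -> F^o}) e : ((a *: v) e = a * v e)%R.
  exact: ffunE.
have size_s : size (map (@mvec F n) s) = size s by rewrite size_map.
set e0 : Mon n := [ffun=> ord0].
have /(congr1 (fun v : {ffun Mon n -> F^o} => v (nth e0 s i))) := sum0.
rewrite sum_ffunE ffunE (bigD1 i) //= big1 => [|j neq_ji].
  by rewrite scaleE (nth_map e0) -?size_s // mvecE eqxx mulr1 addr0.
rewrite scaleE (nth_map e0) -?size_s // mvecE.
by rewrite nth_uniq -?size_s // eq_sym (inj_eq val_inj) (negbTE neq_ji) mulr0.
Qed.

Lemma dim_sum_mvec (F : fieldType) n (P : pred (Mon n)) :
  \dim (\sum_(e : Mon n | P e) <[mvec F e]>)%VS = #|P|.
Proof.
rewrite -big_enum /= -(big_map (@mvec F n) xpredT (fun v => <[v]>%VS)) -span_def.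
by rewrite (eqP (free_mvec F (enum_uniq P))) size_map cardE.
Qed.

Definition mdvd (g f : nat -> nat) := forall i, g i <= f i.

Definition in_mideal (gen : (nat -> nat) -> Prop) (f : nat -> nat) :=
  exists2 g, gen g & mdvd g f.

Definition wsum N (f : nat -> nat) := \sum_(i < N) i * f i.

Definition is_mon k n (f : nat -> nat) :=
  [/\ forall i, i < k -> f i = 0, forall i, n < i -> f i = 0 & wsum n.+1 f = n].

Definition fits n (f : nat -> nat) := (forall i, f i <= n) /\ (forall i, n < i -> f i = 0).

Definition mcount n (P : (nat -> nat) -> Prop) :=
  #|[pred e : Mon n | asb (P (mext e))]|.

Definition mon_of n (f : nat -> nat) : Mon n := [ffun i : 'I_n.+1 => inord (f i)].

Lemma asbP (P : Prop) : reflect P (asb P).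
Proof. by rewrite /asb; case: excluded_middle_informative => h; constructor. Qed.

Lemma mextE n (e : Mon n) (i : 'I_n.+1) : mext e i = e i.
Proof. by rewrite /mext ltn_ord inord_val. Qed.

Lemma mext_fits n (e : Mon n) : fits n (mext e).
Proof.
split=> [i | i i_gt]; rewrite /mext; last by rewrite ltnNge i_gt.
by case: ltnP => // _; rewrite -ltnS ltn_ord.
Qed.

Lemma mext_inj n : injective (@mext n).
Proof.
move=> e1 e2 eq_e; apply/ffunP => i; apply/val_inj.
by rewrite /= -!mextE eq_e.
Qed.

Lemma mon_ofK n f : fits n f -> mext (mon_of n f) = f.
Proof.
move=> [f_le f_gt]; apply: functional_extensionality => i; rewrite /mext.
case: ltnP => [i_lt | i_gt]; last by rewrite f_gt.
by rewrite ffunE !inordK // ltnS.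
Qed.

Lemma mcount_ext n (P Q : (nat -> nat) -> Prop) :
  (forall f, P f <-> Q f) -> mcount n P = mcount n Q.
Proof. by move=> PQ; apply: eq_card => e; rewrite !inE; apply/asbP/asbP => /PQ. Qed.

Lemma mcount0 n (P : (nat -> nat) -> Prop) : (forall f, ~ P f) -> mcount n P = 0.
Proof. by move=> notP; apply: eq_card0 => e; rewrite inE; case: asbP => // /notP. Qed.

Lemma mcountID n (P C : (nat -> nat) -> Prop) :
  mcount n P = mcount n (fun f => P f /\ C f) + mcount n (fun f => P f /\ ~ C f).
Proof.
rewrite /mcount -(cardID [pred e : Mon n | asb (C (mext e))]).
by congr (_ + _); apply: eq_card => e; rewrite !inE;
  apply/andP/asbP => [[/asbP ? /asbP ?] | [? ?]] //; split; apply/asbP.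
Qed.

Lemma mcount_partition n (P : (nat -> nat) -> Prop) j N :
  (forall f, P f -> f j < N) ->
  mcount n P = \sum_(b < N) mcount n (fun f => P f /\ f j = b).
Proof.
elim: N P => [|N IHN] P P_lt.
  by rewrite big_ord0; apply: mcount0 => f /P_lt.
rewrite big_ord_recr /= (mcountID n P (fun f => f j = N)) addnC; congr (_ + _).
rewrite IHN => [|f [/P_lt]]; last lia.
apply: eq_bigr => b _; have := ltn_ord b.
move=> b_lt; apply: mcount_ext => f.
by split=> [[[Pf _] fb] | [Pf fb]] //; do !split => //; lia.
Qed.

Lemma mcount_le n m (P Q : (nat -> nat) -> Prop) (phi psi : (nat -> nat) -> nat -> nat) :
  (forall f, P f -> [/\ Q (phi f), fits m (phi f) & psi (phi f) = f]) ->
  mcount n P <= mcount m Q.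
Proof.
move=> PQ; set A := [pred e : Mon n | asb (P (mext e))].
have inj : {in A &, injective (fun e => mon_of m (phi (mext e)))}.
  move=> e1 e2 /asbP/PQ[_ fit1 K1] /asbP/PQ[_ fit2 K2] /(congr1 (@mext m)).
  by rewrite !mon_ofK // => /(congr1 psi); rewrite K1 K2 => /mext_inj.
rewrite /mcount -/A -(card_in_imset inj); apply/subset_leq_card/subsetP.
by move=> _ /imsetP[e /asbP/PQ[Qphi fit _] ->]; rewrite inE mon_ofK //; apply/asbP.
Qed.

Lemma mcount_bij n m (P Q : (nat -> nat) -> Prop) (phi psi : (nat -> nat) -> nat -> nat) :
  (forall f, P f -> [/\ Q (phi f), fits m (phi f) & psi (phi f) = f]) ->
  (forall g, Q g -> [/\ P (psi g), fits n (psi g) & phi (psi g) = g]) ->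
  mcount n P = mcount m Q.
Proof. by move=> PQ QP; apply/eqP; rewrite eqn_leq (mcount_le n PQ) (mcount_le m QP). Qed.

Lemma is_mon_mext k n (e : Mon n) : reflect (is_mon k n (mext e)) (inSk k e).
Proof.
have wsumE : wsum n.+1 (mext e) = mweight e.
  by apply: eq_bigr => i _; rewrite mextE.
have [_ mext_gt] := mext_fits e.
apply: (iffP andP) => [[/eqP wt /forallP e0] | [mext0 _ wt]].
  split=> // [i i_lt | ]; last by rewrite wsumE.
  case: (ltnP n i) => [/mext_gt // | i_le].
  by have := e0 (inord i); rewrite -mextE !inordK // i_lt => /eqP.
split; first by rewrite -wsumE wt.
by apply/forallP => i; apply/implyP => /mext0; rewrite mextE => ->.
Qed.

Lemma in_mideal_mext gen n (e : Mon n) :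
  reflect (in_mideal gen (mext e)) (inIdeal gen e).
Proof.
apply: (iffP (asbP _)) => [[g [m [gen_g ->]]] | [g gen_g g_dvd]].
  by exists g => // i; rewrite /mmul leq_addr.
exists g, (fun i => mext e i - g i); split=> //.
by apply: functional_extensionality => i; rewrite /mmul subnKC.
Qed.

Lemma HP_mcount F k r l n :
  HP F k r l n = mcount n (fun f => is_mon k n f /\ ~ in_mideal (genLl k r l) f).
Proof.
rewrite /HP /HPcoef /Spiece /Ipiece !dim_sum_mvec.
rewrite -(cardID [pred e : Mon n | inIdeal (genLl k r l) e] [pred e | inSk k e]) addKn.
apply: eq_card => e; rewrite !inE.
apply/andP/asbP => [[/in_mideal_mext notI /is_mon_mext] | [/is_mon_mext Sk notI]] //.
by split=> //; apply/in_mideal_mext.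
Qed.

Lemma wsumD N f g : wsum N (mmul f g) = wsum N f + wsum N g.
Proof. by rewrite /wsum -big_split; apply: eq_bigr => i _; rewrite mulnDr. Qed.

Lemma wsum_xpow N j a : j < N -> wsum N (xpow j a) = j * a.
Proof.
move=> j_lt; rewrite /wsum (bigD1 (Ordinal j_lt)) //= big1 => [|i].
  by rewrite /xpow eqxx addn0.
by rewrite /xpow -(inj_eq val_inj) /= => /negbTE ->; rewrite muln0.
Qed.

Lemma leq_wsum_term N f i : i < N -> i * f i <= wsum N f.
Proof. by move=> i_lt; rewrite /wsum (bigD1 (Ordinal i_lt)) //= leq_addr. Qed.

Lemma wsum_supp n N f : (forall i, n < i -> f i = 0) -> n < N -> wsum N f = wsum n.+1 f.
Proof.
move=> f_gt; elim: N => // N IHN; rewrite ltnS leq_eqVlt => /predU1P[-> // | n_lt].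
by rewrite /wsum big_ord_recr /= -/(wsum N f) IHN // f_gt // muln0 addn0.
Qed.

Lemma is_mon_wsum k n N f : is_mon k n f -> n < N -> wsum N f = n.
Proof. by case=> _ f_gt wt n_lt; rewrite (wsum_supp f_gt n_lt). Qed.

Lemma is_mon_of_wsum k n N f : n < N ->
  (forall i, i < k -> f i = 0) -> (forall i, N <= i -> f i = 0) -> wsum N f = n ->
  is_mon k n f.
Proof.
move=> n_lt f_lt f_ge wt.
have f_gt i : n < i -> f i = 0.
  case: (ltnP i N) => [i_lt i_gt | /f_ge //].
  by have := leq_wsum_term f i_lt; rewrite wt; nia.
by split=> //; rewrite -(wsum_supp f_gt n_lt).
Qed.

Lemma is_mon_fits k n f : 0 < k -> is_mon k n f -> fits n f.
Proof.
move=> k_gt0 [f_lt f_gt wt]; split=> // i.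
case: (ltnP n i) => [/f_gt -> // | i_le].
case: i i_le => [|i] i_le; first by rewrite f_lt.
by have := leq_wsum_term f (i_le : i.+1 < n.+1); rewrite wt; nia.
Qed.

(** * Membership in the ideals L_k and L_k^l *)

Lemma mdvd_xpow i a f : mdvd (xpow i a) f <-> a <= f i.
Proof.
split=> [/(_ i) | a_le j]; rewrite /xpow ?eqxx //.
by case: eqP => [-> //|].
Qed.

Lemma mdvd_xpow2 i j a b f : i != j ->
  mdvd (mmul (xpow i a) (xpow j b)) f <-> a <= f i /\ b <= f j.
Proof.
rewrite /mdvd /mmul /xpow => neq_ij; split=> [dvd_f | [a_le b_le] x].
  have := dvd_f i; have := dvd_f j.
  by rewrite !eqxx eq_sym (negbTE neq_ij); lia.
by case: (x =P i) => ?; case: (x =P j) => ?; subst; lia.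
Qed.

Lemma mdvd_xpow3 i j h a b c f : i != j -> i != h -> j != h ->
  mdvd (mmul (mmul (xpow i a) (xpow j b)) (xpow h c)) f <->
  a <= f i /\ b <= f j /\ c <= f h.
Proof.
rewrite /mdvd /mmul /xpow => neq_ij neq_ih neq_jh; split=> [dvd_f | [a_le [b_le c_le]] x].
  have := dvd_f i; have := dvd_f j; have := dvd_f h.
  rewrite !eqxx ![_ == i]eq_sym [h == j]eq_sym.
  by rewrite (negbTE neq_ij) (negbTE neq_ih) (negbTE neq_jh); lia.
by case: (x =P i) => ?; case: (x =P j) => ?; case: (x =P h) => ?; subst; lia.
Qed.

(* [divL_at r f i]: x^f is divisible by a generator of L_i whose lowest variable is x_i,
   i.e. by x_i^2 or x_i x_{i+1}^(r-1) for odd i, and by some x_i^(r-n) x_{i+2}^n or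
   x_i^(r-n-1) x_{i+1} x_{i+2}^n for even i. *)
Definition divL_at r (f : nat -> nat) i : bool :=
  if odd i then (1 < f i) || (0 < f i) && (r - 1 <= f i.+1)
  else (0 < f i) && ((r <= f i + f i.+2) || (0 < f i.+1) && (r - 1 <= f i + f i.+2)).

Lemma in_mideal_genL k r f : 2 <= r ->
  in_mideal (genL k r) f <-> exists2 i, k <= i & divL_at r f i.
Proof.
move=> r_ge2; split.
  case=> g [|[|[|]]].
  - move=> [i [odd_i [k_le ->]]] /mdvd_xpow le_f.
    by exists i => //; rewrite /divL_at odd_i; lia.
  - move=> [i [odd_i [k_le ->]]] /mdvd_xpow2 []; first lia.
    by move=> *; exists i => //; rewrite /divL_at odd_i; lia.
  - move=> [i [n1 [even_i [k_le [n1_le ->]]]]] /mdvd_xpow2 []; first lia.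
    by move=> *; exists i => //; rewrite /divL_at (negbTE even_i); lia.
  - move=> [i [n2 [even_i [k_le [n2_le ->]]]]] /mdvd_xpow3 []; try lia.
    by move=> *; exists i => //; rewrite /divL_at (negbTE even_i); lia.
move=> [i k_le]; rewrite /divL_at; case: ifP => [odd_i | /negbT even_i].
  case/orP=> [le_f | /andP[pos_f le_f]].
    by exists (xpow i 2); [left; exists i | apply/mdvd_xpow].
  exists (mmul (xpow i 1) (xpow i.+1 (r - 1))); first by right; left; exists i.
  by apply/mdvd_xpow2; lia.
case/andP=> pos_f /orP[le_f | /andP[pos_f1 le_f]].
  set n1 := r - minn r (f i).
  exists (mmul (xpow i (r - n1)) (xpow i.+2 n1)).
    by right; right; left; exists i, n1; do !split => //; lia.
  by apply/mdvd_xpow2; lia.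
set n2 := r - 1 - minn (r - 1) (f i).
exists (mmul (mmul (xpow i (r - n2 - 1)) (xpow i.+1 1)) (xpow i.+2 n2)).
  by right; right; right; exists i, n2; do !split => //; lia.
by apply/mdvd_xpow3; lia.
Qed.

Lemma in_mideal_genLeven k r l f : ~~ odd k -> 2 <= r -> 1 <= l <= r ->
  in_mideal (genLeven k r l) f <-> l <= f k \/ exists2 i, k <= i & divL_at r f i.
Proof.
move=> even_k r_ge2 l_bounds; split.
  case=> g [-> /mdvd_xpow | [[t [t_bounds [-> | ->]]] | genL_g] g_dvd]; [by left | | |].
  - right; exists k => //; move/mdvd_xpow2: g_dvd => [|le_fk le_fk2]; first lia.
    by rewrite /divL_at (negbTE even_k); lia.
  - right; exists k => //; move/mdvd_xpow3: g_dvd => [||| le_f]; try lia.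
    by rewrite /divL_at (negbTE even_k); lia.
  - have [|i k_lt divL_i] := (in_mideal_genL k.+1 f r_ge2).1; first by exists g.
    by right; exists i => //; apply: ltnW.
case=> [le_fk | [i]]; first by exists (xpow k l); [left | apply/mdvd_xpow].
rewrite leq_eqVlt => /predU1P[<- | k_lt divL_i]; last first.
  have [|g genL_g g_dvd] := (in_mideal_genL k.+1 f r_ge2).2; first by exists i.
  by exists g => //; right; right.
case: (leqP l (f k)) => [le_fk _ | lt_fk]; first by exists (xpow k l); [left | apply/mdvd_xpow].
rewrite /divL_at (negbTE even_k) => /andP[pos_fk /orP[le_f | /andP[pos_fk1 le_f]]].
  set t := l - f k.
  exists (mmul (xpow k (l - t)) (xpow k.+2 (r - l + t))).
    by right; left; exists t; split; [lia | left].
  by apply/mdvd_xpow2; lia.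
set t := l - f k.
exists (mmul (mmul (xpow k (l - t)) (xpow k.+1 1)) (xpow k.+2 (r - l + t - 1))).
  by right; left; exists t; split; [lia | right].
by apply/mdvd_xpow3; lia.
Qed.

Lemma in_mideal_genLl_odd k r l f : odd k -> 2 <= r -> 1 <= l <= r ->
  in_mideal (genLl k r l) f <->
  [\/ 1 < f k, 0 < f k /\ l - 1 <= f k.+1, l <= f k.+1 |
      exists2 i, k.+1 <= i & divL_at r f i].
Proof.
move=> odd_k r_ge2 l_bounds; rewrite /genLl odd_k.
have even_k1 : ~~ odd k.+1 by rewrite /= odd_k.
split.
  case=> g [-> /mdvd_xpow | [-> /mdvd_xpow2 | genLeven_g g_dvd]].
  - by constructor 1; lia.
  - by case=> [|le_fk le_fk1]; [lia | constructor 2; lia].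
  have [|le_fk1 | [i k1_le divL_i]] := (in_mideal_genLeven f even_k1 r_ge2 l_bounds).1.
  + by exists g.
  + by constructor 3.
  + by constructor 4; exists i.
case=> [le_fk | [pos_fk le_fk1] | le_fk1 | divL].
- by exists (xpow k 2); [left | apply/mdvd_xpow].
- by exists (mmul (xpow k 1) (xpow k.+1 (l - 1))); [right; left | apply/mdvd_xpow2; lia].
- have [|g genLeven_g g_dvd] := (in_mideal_genLeven f even_k1 r_ge2 l_bounds).2; first by left.
  by exists g => //; right; right.
- have [|g genLeven_g g_dvd] := (in_mideal_genLeven f even_k1 r_ge2 l_bounds).2; first by right.
  by exists g => //; right; right.
Qed.

Lemma notin_genLl_odd_bounds k r l f : odd k -> 2 <= r -> 1 <= l <= r ->
  ~ in_mideal (genLl k r l) f -> f k <= 1 /\ f k + f k.+1 < l.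
Proof.
move=> odd_k r_ge2 l_bounds; rewrite in_mideal_genLl_odd // => notI.
suff : ~ 1 < f k /\ ~ (0 < f k /\ l - 1 <= f k.+1) /\ ~ l <= f k.+1 by lia.
by split; [|split] => ?; apply: notI; [constructor 1 | constructor 2 | constructor 3].
Qed.

(** * Dividing out x_k^a x_{k+1}^b *)

Definition cut_below m (f : nat -> nat) i := if m <= i then f i else 0.

Lemma divL_at_cut r m f i : m <= i -> divL_at r (cut_below m f) i = divL_at r f i.
Proof.
move=> m_le; have [m_le1 m_le2] : m <= i.+1 /\ m <= i.+2 by lia.
by rewrite /divL_at /cut_below m_le m_le1 m_le2.
Qed.

Lemma ex2_leq_split (P : nat -> Prop) m :
  (exists2 i, m <= i & P i) <-> P m \/ exists2 i, m.+1 <= i & P i.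
Proof.
split=> [[i] | [Pm | [i m_lt Pi]]]; [|by exists m|by exists i => //; apply: ltnW].
by rewrite leq_eqVlt => /predU1P[<-|]; [left | right; exists i].
Qed.

Lemma in_mideal_slice k r l f : odd k -> 2 <= r -> 1 <= l <= r ->
  f k <= 1 -> f k + f k.+1 < l ->
  in_mideal (genLl k r l) f <-> in_mideal (genLl k.+2 r (r - f k.+1)) (cut_below k.+2 f).
Proof.
move=> odd_k r_ge2 l_bounds fk_le fk1_lt.
have odd_k2 : odd k.+2 by rewrite /= negbK.
rewrite in_mideal_genLl_odd // in_mideal_genLl_odd //; last by lia.
have [cut2 cut3] : cut_below k.+2 f k.+2 = f k.+2 /\ cut_below k.+2 f k.+3 = f k.+3.
  by rewrite /cut_below leqnn ltnW.
rewrite cut2 cut3.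
have divL_k1 : divL_at r f k.+1 = (0 < f k.+1) &&
    ((r <= f k.+1 + f k.+3) || (0 < f k.+2) && (r - 1 <= f k.+1 + f k.+3)).
  by rewrite /divL_at /= odd_k.
have divL_k2 : divL_at r f k.+2 = (1 < f k.+2) || (0 < f k.+2) && (r - 1 <= f k.+3).
  by rewrite /divL_at odd_k2.
have divL_k3 : r <= f k.+3 -> divL_at r f k.+3.
  by rewrite /divL_at /= odd_k /=; lia.
split.
  case=> [|[]||]; try lia.
  case/ex2_leq_split=> [| /ex2_leq_split[| [i lt_i divL_i]]].
  - by rewrite divL_k1 => /andP[_ /orP[| /andP[]]]; [constructor 3 | constructor 2]; lia.
  - by rewrite divL_k2 => /orP[| /andP[]]; [constructor 1 | constructor 2]; lia.
  - by constructor 4; exists i => //; rewrite divL_at_cut // ltnW.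
case=> [le_fk2 | [pos_fk2 le_fk3] | le_fk3 | [i lt_i divL_i]]; constructor 4.
- by exists k.+2; rewrite // divL_k2 le_fk2.
- case: (posnP (f k.+1)) => [b0 | b_pos].
    by exists k.+2; rewrite // divL_k2; lia.
  by exists k.+1; rewrite // divL_k1; lia.
- case: (posnP (f k.+1)) => [b0 | b_pos].
    by exists k.+3; [lia | apply: divL_k3; lia].
  by exists k.+1; rewrite // divL_k1; lia.
- by rewrite divL_at_cut in divL_i; [exists i; [lia |] | apply: ltnW].
Qed.

Lemma cut_below_mmul k a b g : (forall i, i < k.+2 -> g i = 0) ->
  cut_below k.+2 (mmul g (mmul (xpow k a) (xpow k.+1 b))) = g.
Proof.
move=> g_lt; apply: functional_extensionality => i; rewrite /cut_below /mmul /xpow.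
case: leqP => ?; have := g_lt i; case: (i =P k) => ?; case: (i =P k.+1) => ?; lia.
Qed.

Lemma mmul_cut_below k f : (forall i, i < k -> f i = 0) ->
  mmul (cut_below k.+2 f) (mmul (xpow k (f k)) (xpow k.+1 (f k.+1))) = f.
Proof.
move=> f_lt; apply: functional_extensionality => i; rewrite /cut_below /mmul /xpow.
case: leqP => ?; have := f_lt i; case: (i =P k) => ?; case: (i =P k.+1) => ?; subst; lia.
Qed.

Lemma mmul_xpow2_at k a b g : (forall i, i < k.+2 -> g i = 0) ->
  mmul g (mmul (xpow k a) (xpow k.+1 b)) k = a /\
  mmul g (mmul (xpow k a) (xpow k.+1 b)) k.+1 = b.
Proof.
move=> g_lt; rewrite /mmul /xpow (g_lt k) ?(g_lt k.+1) // !eqxx.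
by rewrite (ltn_eqF (ltnSn k)) (gtn_eqF (ltnSn k)) addn0.
Qed.

Lemma wsum_cut_below N k f : (forall i, i < k -> f i = 0) -> k.+1 < N ->
  wsum N f = wsum N (cut_below k.+2 f) + (k * f k + k.+1 * f k.+1).
Proof.
move=> f_lt k1_lt; rewrite -{1}(mmul_cut_below f_lt) !wsumD !wsum_xpow //.
exact: ltnW.
Qed.

Lemma is_mon_cut_below k n f : is_mon k n f ->
  k * f k + k.+1 * f k.+1 <= n /\
  is_mon k.+2 (n - (k * f k + k.+1 * f k.+1)) (cut_below k.+2 f).
Proof.
move=> mon_f; have [f_lt f_gt _] := mon_f; set N := k.+2 + n.
have := wsum_cut_below f_lt (_ : k.+1 < N); rewrite (is_mon_wsum mon_f) => [wt|]; last lia.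
split; first lia.
apply: (@is_mon_of_wsum _ _ N); first lia.
- by move=> i i_lt; rewrite /cut_below leqNgt i_lt.
- by move=> i i_ge; rewrite /cut_below f_gt ?if_same //; lia.
- lia.
Qed.

Lemma is_mon_mmul_xpow2 k m a b g : is_mon k.+2 m g ->
  is_mon k (m + (k * a + k.+1 * b)) (mmul g (mmul (xpow k a) (xpow k.+1 b))).
Proof.
move=> mon_g; have [g_lt g_gt _] := mon_g.
set f := mmul g _; set N := k.+2 + (m + (k * a + k.+1 * b)).
have [fk fk1] : f k = a /\ f k.+1 = b := mmul_xpow2_at a b g_lt.
have f_lt i : i < k -> f i = 0.
  move=> i_lt; rewrite /f /mmul /xpow g_lt; last lia.
  by rewrite (ltn_eqF i_lt) (ltn_eqF (leqW i_lt)).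
apply: (@is_mon_of_wsum _ _ N); first lia.
- exact: f_lt.
- move=> i i_ge; rewrite /f /mmul /xpow g_gt; last lia.
  by case: (i =P k) => ?; case: (i =P k.+1) => ?; lia.
rewrite (wsum_cut_below f_lt) ?fk ?fk1; last lia.
by rewrite /f cut_below_mmul // (is_mon_wsum mon_g) //; lia.
Qed.

Lemma mcount_slice F k r l a b n : odd k -> 2 <= r -> 1 <= l <= r -> a <= 1 -> a + b < l ->
  mcount n (fun f => ((is_mon k n f /\ ~ in_mideal (genLl k r l) f) /\ f k = a) /\ f k.+1 = b)
  = qshift (k * a + k.+1 * b) (HP F k.+2 r (r - b)) n.
Proof.
move=> odd_k r_ge2 l_bounds a_le ab_lt.
have k_gt0 : 0 < k by case: k odd_k.
have slice f : f k = a -> f k.+1 = b -> in_mideal (genLl k r l) f <->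
    in_mideal (genLl k.+2 r (r - b)) (cut_below k.+2 f).
  by move=> fk fk1; rewrite -fk1; apply: in_mideal_slice => //; lia.
rewrite /qshift; case: leqP => [s_le | s_gt]; last first.
  by apply: mcount0 => f [[[/is_mon_cut_below[+ _] _] fk] fk1]; rewrite fk fk1; lia.
rewrite HP_mcount; set s := k * a + k.+1 * b.
apply: (mcount_bij (phi := cut_below k.+2)
                   (psi := fun g => mmul g (mmul (xpow k a) (xpow k.+1 b)))).
  move=> f [[[mon_f notI] fk] fk1].
  have [_ mon_cut] := is_mon_cut_below mon_f; rewrite fk fk1 -/s in mon_cut.
  split; [by split=> // /(slice f fk fk1) | exact: is_mon_fits _ mon_cut |].
  by rewrite -fk -fk1 mmul_cut_below //; case: mon_f.
move=> g [mon_g notI]; have [g_lt _ _] := mon_g.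
have [fk fk1] := mmul_xpow2_at a b g_lt.
have := is_mon_mmul_xpow2 a b mon_g; rewrite -/s subnK // => mon_f.
split; [| exact: is_mon_fits k_gt0 mon_f | exact: cut_below_mmul].
by do !split=> //; rewrite (slice _ fk fk1) cut_below_mmul.
Qed.

Theorem lemma2p1 (F : fieldType) (J r l k : nat) :
  [pchar F]%R =i pred0 ->
  2 <= r -> 1 <= l <= r ->
  odd k -> 2 * J + 1 <= k ->
  forall n : nat,
    HP F k r l n =
      (\sum_(1 <= j < l) qshift ((k + 1) * j - 1) (HP F (k + 2) r (r - j + 1)) n
     + \sum_(1 <= j < l.+1) qshift ((k + 1) * (j - 1)) (HP F (k + 2) r (r - j + 1)) n)%N.
Proof.
move=> _ r_ge2 l_bounds odd_k _ n.
set P := fun f => is_mon k n f /\ ~ in_mideal (genLl k r l) f.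
have P_bounds f : P f -> f k <= 1 /\ f k + f k.+1 < l.
  by case=> _; apply: notin_genLl_odd_bounds.
have slices a : a <= 1 -> mcount n (fun f => P f /\ f k = a) =
    \sum_(b < l - a) qshift (k * a + k.+1 * b) (HP F k.+2 r (r - b)) n.
  move=> a_le; rewrite (mcount_partition _ (j := k.+1) (N := l - a)) => [|f [/P_bounds]]; last lia.
  by apply: eq_bigr => b _; rewrite (mcount_slice F) //; have := ltn_ord b; lia.
rewrite HP_mcount -/P (mcount_partition _ (j := k) (N := 2)) => [|f /P_bounds]; last lia.
rewrite big_ord_recl big_ord1 !slices // subn0 subn1 addnC addn2.
rewrite !big_add1 !big_mkord /=; congr (_ + _); apply: eq_bigr => b _;
  have b_lt := ltn_ord b; congr (qshift _ (HP _ _ _ _) _); rewrite /bump /=; lia.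
Qed.
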